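(* Let $\mathrm P$ be a probability measure on $\mathbb{R}^d$ having a Lebesgue density, and let $\varphi$ be as in the context. For every $\mathbf u\in\mathbb S_{d-1}$, every sequence of reals $t_n\to\infty$, and every choice $\mathbf y_n\in\partial\varphi(t_n\mathbf u)$, we have $\lim_{n\to\infty}\mathbf y_n=\mathbf u$.
   Context: $\mathbb{B}_d$ is the open unit ball of $\mathbb{R}^d$ and $\mathbb S_{d-1}$ the unit sphere. $\mathrm U_d$ is the spherical uniform distribution on $\mathbb B_d$ (density $u_d(\mathbf x)=\frac{1}{a_d|\mathbf x|^{d-1}}$ on $\mathbb B_d\setminus\{\mathbf 0\}$, $a_d=2\pi^{d/2}/\Gamma(d/2)$). $\psi$ is the convex lsc function on $\mathbb B_d$, normalized by $\psi(\mathbf 0)=0$, whose a.e. gradient pushes $\mathrm U_d$ forward to $\mathrm P$ (McCann), extended by $+\infty$ outside $\bar{\mathbb B}_d$, and $\varphi(\mathbf x)=\sup_{\mathbf u\in\mathbb B_d}(\langle\mathbf u,\mathbf x\rangle-\psi(\mathbf u))$, $\mathbf x\in\mathbb{R}^d$, a convex function with $\nabla\varphi\sharp\mathrm P=\mathrm U_d$. $\partial\varphi$ is the subdifferential. *)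

(* R^d is modelled as d.-tuple R, equipped
   with the library's product (= Borel) sigma-algebra on tuples. *)
From HB Require Import structures.
From mathcomp Require Import all_boot all_order all_algebra.
From mathcomp Require Import all_classical all_reals all_analysis.
Set Implicit Arguments. Unset Strict Implicit. Unset Printing Implicit Defensive.
Import Order.TTheory GRing.Theory Num.Theory.
Local Open Scope classical_set_scope.
Local Open Scope ring_scope.

Section Defs.
Variables (R : realType) (d : nat).
Notation V := (d.-tuple R).

Definition vadd (x y : V) : V := [tuple tnth x i + tnth y i | i < d].
Definition vsub (x y : V) : V := [tuple tnth x i - tnth y i | i < d].
Definition vscale (a : R) (x : V) : V := [tuple a * tnth x i | i < d].
Definition dotv (x y : V) : R := \sum_(i < d) tnth x i * tnth y i.
Definition normv (x : V) : R := Num.sqrt (dotv x x).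

Definition unit_ball : set V := [set x | normv x < 1].
Definition unit_sphere : set V := [set x | normv x = 1].

Definition convex_on_ball (psi : V -> R) : Prop :=
  forall x y, unit_ball x -> unit_ball y -> forall l : R, 0 <= l <= 1 ->
    psi (vadd (vscale l x) (vscale (1 - l) y)) <= l * psi x + (1 - l) * psi y.

Definition lsc_on_ball (psi : V -> R) : Prop :=
  forall x, unit_ball x -> forall e : R, 0 < e -> exists2 del : R, 0 < del &
    forall z, unit_ball z -> normv (vsub z x) < del -> psi x - e < psi z.

Definition has_gradient (psi : V -> R) (x g : V) : Prop :=
  forall e : R, 0 < e -> exists2 del : R, 0 < del &
    forall h, 0 < normv h < del ->
      `|psi (vadd x h) - psi x - dotv g h| <= e * normv h.

Definition Gamma (s : R) : R :=
  Rintegral lebesgue_measure `]0, +oo[ (fun x : R => x `^ (s - 1) * expR (- x)).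

(* a_d = 2 pi^(d/2) / Gamma(d/2), the surface area of S_{d-1} *)
Definition a_d : R := 2 * pi `^ (d%:R / 2) / Gamma (d%:R / 2).

(* density u_d of the spherical uniform U_d (zero outside B_d \ {0}) *)
Definition u_d (x : V) : R :=
  if (0 < normv x < 1)%R then (a_d * normv x ^+ d.-1)^-1 else 0.

Definition U_d (lam : set V -> \bar R) (A : set V) : \bar R :=
  (\int[lam]_(x in A) (u_d x)%:E)%E.

Definition is_lebesgue_measure (lam : {measure set V -> \bar R}) : Prop :=
  forall a b : V,
    lam [set x | forall i, tnth a i < tnth x i <= tnth b i] =
    (\prod_(i < d) Num.max (tnth b i - tnth a i) 0)%:E.

Definition has_lebesgue_density (lam : {measure set V -> \bar R})
    (P : probability V R) : Prop :=
  exists f : V -> R, [/\ measurable_fun setT f, (forall x, 0 <= f x) &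
    forall A, measurable A -> P A = (\int[lam]_(x in A) (f x)%:E)%E].

Definition gradient_pushes_forward (lam : {measure set V -> \bar R})
    (psi : V -> R) (P : probability V R) : Prop :=
  exists T : V -> V, [/\ measurable_fun setT T,
    (exists N : set V, [/\ measurable N, U_d lam N = 0%E &
        forall x, unit_ball x -> ~ N x -> has_gradient psi x (T x)]) &
    forall A, measurable A -> P A = U_d lam (T @^-1` A)].

Definition legendre_ball (psi : V -> R) (x : V) : \bar R :=
  ereal_sup [set ((dotv u x - psi u)%:E) | u in unit_ball].

Definition subdiff (f : V -> \bar R) (x : V) : set V :=
  [set y | f x \is a fin_num /\
           forall z, (f x + (dotv y (vsub z x))%:E <= f z)%E].

End Defs.

(** Every subgradient y of phi lies in the closed unit ball (phi grows at
   most like the support function of the ball), and at t u the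
   subgradient inequality at 0 gives t (s - <y, u>) <= phi(0) + psi(s u) for
   every s < 1, the right-hand side being a constant.  Hence <y, u> -> 1, and
   |y - u|^2 = |y|^2 - 2 <y, u> + 1 <= 2 - 2 <y, u> -> 0. *)
From HB Require Import structures.
From mathcomp Require Import all_boot all_order all_algebra.
From mathcomp Require Import all_classical all_reals all_analysis.
From mathcomp Require Import ring lra.
Import Order.TTheory GRing.Theory Num.Theory.
Local Open Scope classical_set_scope.
Local Open Scope ring_scope.

Set Implicit Arguments. Unset Strict Implicit.

Section Euclidean.
Variables (R : realType) (d : nat).
Implicit Types x y z : d.-tuple R.

Local Notation zero := [tuple of nseq d (0 : R)].

Lemma dotvBr x y z : dotv x (vsub y z) = dotv x y - dotv x z.
Proof.
rewrite /dotv -sumrB; apply: eq_bigr => i _.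
by rewrite tnth_mktuple mulrBr.
Qed.

Lemma dotvZr x a y : dotv x (vscale a y) = a * dotv x y.
Proof.
rewrite /dotv mulr_sumr; apply: eq_bigr => i _.
by rewrite tnth_mktuple mulrCA.
Qed.

Lemma dotvZl x a y : dotv (vscale a y) x = a * dotv y x.
Proof.
rewrite /dotv mulr_sumr; apply: eq_bigr => i _.
by rewrite tnth_mktuple mulrA.
Qed.

Lemma dotv0r x : dotv x zero = 0.
Proof. by rewrite /dotv big1 // => i _; rewrite tnth_nseq mulr0. Qed.

Lemma dotvv_ge0 x : 0 <= dotv x x.
Proof. by rewrite /dotv sumr_ge0 // => i _; rewrite -expr2 sqr_ge0. Qed.

Lemma dotvBB x y :
  dotv (vsub x y) (vsub x y) = dotv x x - 2 * dotv x y + dotv y y.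
Proof.
rewrite /dotv mulr_sumr -sumrB -big_split /=; apply: eq_bigr => i _.
by rewrite !tnth_mktuple; ring.
Qed.

Lemma dotv_le_amgm x y : 2 * dotv x y <= dotv x x + dotv y y.
Proof. by have := dotvv_ge0 (vsub x y); rewrite dotvBB; lra. Qed.

Lemma vsub_vaddKl x y : vsub (vadd x y) x = y.
Proof. by apply: eq_from_tnth => i; rewrite !tnth_mktuple addrC addKr. Qed.

Lemma normv_sqr x : normv x ^+ 2 = dotv x x.
Proof. by rewrite /normv sqr_sqrtr // dotvv_ge0. Qed.

Lemma unit_ballE x : unit_ball x <-> dotv x x < 1.
Proof.
by rewrite /unit_ball /= -normv_sqr expr_lt1 // sqrtr_ge0.
Qed.

Lemma normv_lt x e : 0 < e -> dotv x x < e ^+ 2 -> normv x < e.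
Proof.
move=> e0 xe; rewrite /normv.
by rewrite -[e in _ < e]gtr0_norm // -sqrtr_sqr ltr_sqrt // exprn_gt0.
Qed.

Lemma unit_sphere_dotvv x : unit_sphere x -> dotv x x = 1.
Proof. by move=> x1; rewrite -normv_sqr x1 expr1n. Qed.

Lemma unit_ball_scale_sphere x s :
  unit_sphere x -> 0 <= s < 1 -> unit_ball (vscale s x).
Proof.
move=> /unit_sphere_dotvv x1 /andP[s0 s1]; apply/unit_ballE.
by rewrite dotvZr dotvZl x1 mulr1; nra.
Qed.

End Euclidean.

Section LegendreBall.
Variables (R : realType) (d : nat) (psi : d.-tuple R -> R).
Implicit Types v w x y z : d.-tuple R.

Local Notation F := (legendre_ball psi).
Local Notation zero := [tuple of nseq d (0 : R)].

Lemma legendre_ball_ge v x :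
  unit_ball v -> ((dotv v x - psi v)%:E <= F x)%E.
Proof. by move=> v1; apply: ereal_sup_ubound; exists v. Qed.

(* The support function |z - x| of the ball is bounded via AM-GM, which avoids
   Cauchy-Schwarz. *)
Lemma legendre_ball_le x z :
  (F z <= F x + ((1 + dotv (vsub z x) (vsub z x)) / 2)%:E)%E.
Proof.
apply: ge_ereal_sup => _ [v /[dup] v1 /unit_ballE vv <-].
have vx := legendre_ball_ge x v1.
have := dotv_le_amgm v (vsub z x); rewrite dotvBr => vh.
have -> : dotv v z - psi v = (dotv v x - psi v) + (dotv v z - dotv v x) by ring.
by rewrite EFinD leeD // lee_fin; lra.
Qed.

Lemma subdiff_legendre_ball_dotvv x y : subdiff F x y -> dotv y y <= 1.
Proof.
move=> [Fx_fin /(_ (vadd x y))]; rewrite vsub_vaddKl.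
move=> /le_trans /(_ (legendre_ball_le x (vadd x y))); rewrite vsub_vaddKl.
by rewrite -(fineK Fx_fin) -!EFinD lee_fin; lra.
Qed.

Lemma subdiff_legendre_ball_le0 x y w :
  subdiff F x y -> unit_ball w ->
  ((dotv w x - dotv y x - psi w)%:E <= F zero)%E.
Proof.
move=> [_ /(_ zero)] + w1; rewrite dotvBr dotv0r sub0r.
apply: le_trans.
by rewrite addrAC EFinD leeD // legendre_ball_ge.
Qed.

Lemma legendre_ball0_ub x y : subdiff F x y -> exists B : R, (F zero <= B%:E)%E.
Proof.
move=> [Fx_fin _]; eexists.
by rewrite (le_trans (legendre_ball_le x zero)) // -(fineK Fx_fin) -EFinD.
Qed.

(* Along the ray t u, the subgradient inequality at 0 against the ball point
   s u gives t (s - <y, u>) <= F 0 + psi (s u). *)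
Lemma subdiff_legendre_ball_ray u (t : nat -> R) (y : nat -> d.-tuple R) s k :
  unit_sphere u -> t @ \oo --> +oo -> 0 <= s < 1 -> 0 < k ->
  (forall n, subdiff F (vscale (t n) u) (y n)) ->
  exists N, forall n, (N <= n)%N -> s - k < dotv (y n) u.
Proof.
move=> u1 /cvgryPge t_oo s01 k0 yF.
have su1 := unit_ball_scale_sphere u1 s01.
have [B FB] := legendre_ball0_ub (yF 0%N).
pose C := B + psi (vscale s u).
have [N _ tN] := t_oo ((`|C| + 1) / k).
exists N => n /tN /= tn; rewrite ltNge; apply/negP => yu.
have := le_trans (subdiff_legendre_ball_le0 (yF n) su1) FB.
rewrite lee_fin !dotvZr dotvZl (unit_sphere_dotvv u1) mulr1 => Ct.
have tk : `|C| + 1 <= t n * k by rewrite -ler_pdivrMr.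
have t0 : 0 < t n by apply: lt_le_trans tn; rewrite divr_gt0 // ltr_pwDr.
have : t n * k <= t n * (s - dotv (y n) u) by rewrite ler_pM2l //; lra.
by have := ler_norm C; rewrite /C; nra.
Qed.

End LegendreBall.

Lemma normv_sub_sphere_lt (R : realType) (d : nat) (y u : d.-tuple R) e :
  unit_sphere u -> dotv y y <= 1 -> 0 < e -> 1 - e ^+ 2 / 2 < dotv y u ->
  normv (vsub y u) < e.
Proof.
move=> /unit_sphere_dotvv u1 y1 e0 yu; apply: normv_lt => //.
by rewrite dotvBB u1; lra.
Qed.

Theorem proposition3p1 (R : realType) (d : nat)
    (lam : {measure set (d.-tuple R) -> \bar R})
    (P : probability (d.-tuple R) R) (psi : d.-tuple R -> R) :
  is_lebesgue_measure lam ->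
  has_lebesgue_density lam P ->
  convex_on_ball psi -> lsc_on_ball psi -> psi [tuple of nseq d 0] = 0 ->
  gradient_pushes_forward lam psi P ->
  forall (u : d.-tuple R), unit_sphere u ->
  forall (t : nat -> R), t @ \oo --> +oo ->
  forall (y : nat -> d.-tuple R),
    (forall n, subdiff (legendre_ball psi) (vscale (t n) u) (y n)) ->
  forall e : R, 0 < e -> exists N : nat, forall n, (N <= n)%N ->
    normv (vsub (y n) u) < e.
Proof.
move=> _ _ _ _ _ _ u u1 t t_oo y yF e e0.
pose k := Num.min (e ^+ 2 / 4) (1 / 2).
have k0 : 0 < k by rewrite lt_min !divr_gt0 // exprn_gt0.
have ke : k <= e ^+ 2 / 4 by rewrite ge_min lexx.
have k12 : k <= 1 / 2 by rewrite ge_min lexx orbT.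
have s01 : 0 <= 1 - k < 1 by apply/andP; split; lra.
have [N yu] := subdiff_legendre_ball_ray u1 t_oo s01 k0 yF.
exists N => n /yu yun; apply: normv_sub_sphere_lt => //.
  exact: subdiff_legendre_ball_dotvv (yF n).
by lra.
Qed.
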